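(* Let $K$ be a field and let $f\colon\mathbb Z^k\to K$ be a hypergeometric term on $\mathbb Z^k$ that is not a zero divisor. Then for each $\vec v\in\mathbb Z^k$ there is a unique term ratio of $f$ in the direction $\vec v$.
   Context: For $f\colon\mathbb Z^k\to K$ and $\vec v\in\mathbb Z^k$ write $f^{\vec v}(\vec z)=f(\vec z+\vec v)$. A hypergeometric term on $\mathbb Z^k$ over $K$ is a function $f\colon\mathbb Z^k\to K$ such that for each $i\in\{1,\dots,k\}$ there are nonzero polynomials $A_i,B_i\in K[\vec z]$ with $A_i(\vec z)f(\vec z)=B_i(\vec z)f(\vec z+\vec e_i)$ for all $\vec z\in\mathbb Z^k$. $f$ is a zero divisor if there is a nonzero polynomial $p$ with $p(\vec z)f(\vec z)=0$ for all $\vec z$. A term ratio of $f$ in the direction $\vec v$ is a rational function $R_{\vec v}=A_{\vec v}/B_{\vec v}\in K(\vec z)$ where $A_{\vec v},B_{\vec v}\in K[\vec z]$ are nonzero polynomials with $A_{\vec v}f=B_{\vec v}f^{\vec v}$ pointwise on $\mathbb Z^k$. *)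

From HB Require Import structures.
From mathcomp Require Import all_boot all_order all_algebra.
From mathcomp Require Import fraction.
From mathcomp.multinomials Require Import mpoly.
Set Implicit Arguments. Unset Strict Implicit. Unset Printing Implicit Defensive.
Import GRing.Theory.
Local Open Scope ring_scope.

Definition shiftZ (k : nat) (v z : 'I_k -> int) : 'I_k -> int :=
  fun i => z i + v i.

Definition unitZ (k : nat) (i : 'I_k) : 'I_k -> int :=
  fun j => ((j == i) : nat)%:Z.

Definition evalZ (K : fieldType) (k : nat) (p : {mpoly K[k]}) (z : 'I_k -> int) : K :=
  p.@[fun i => (z i)%:~R].

Definition hypergeometric (K : fieldType) (k : nat) (f : ('I_k -> int) -> K) : Prop :=
  forall i : 'I_k, exists (A B : {mpoly K[k]}),
    [/\ A != 0, B != 0 &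
        forall z, evalZ A z * f z = evalZ B z * f (shiftZ (unitZ i) z)].

Definition zero_divisor (K : fieldType) (k : nat) (f : ('I_k -> int) -> K) : Prop :=
  exists p : {mpoly K[k]}, p != 0 /\ forall z, evalZ p z * f z = 0.

Definition term_ratio (K : fieldType) (k : nat) (f : ('I_k -> int) -> K)
  (v : 'I_k -> int) (R : {fraction {mpoly K[k]}}) : Prop :=
  exists (A B : {mpoly K[k]}),
    [/\ A != 0, B != 0, R = tofrac A / tofrac B &
        forall z, evalZ A z * f z = evalZ B z * f (shiftZ v z)].

(* If [A f = B f^v] and [C f = D f^w], evaluating the second relation at [z + v]
   gives [(A C(z+v)) f = (B D(z+v)) f^(v+w)], and [A f = B f^v] at [z - v] gives
   [B(z-v) f = A(z-v) f^(-v)].  The shifted polynomials are nonzero: a polynomial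
   whose shift is zero vanishes on all of Z^k, hence would annihilate [f].  So the
   directions admitting a term ratio form a subgroup of Z^k containing the unit
   vectors, i.e. all of Z^k.  Two term ratios [A/B] and [A'/B'] in one direction
   satisfy [(A B' - A' B) f = 0], whence [A B' = A' B]. *)

From HB Require Import structures.
From mathcomp Require Import all_boot all_order all_algebra.
From mathcomp Require Import fraction.
From mathcomp.multinomials Require Import mpoly.
From mathcomp Require Import ring.
From Stdlib Require Import FunctionalExtensionality.
Set Implicit Arguments. Unset Strict Implicit.
Import GRing.Theory.
Local Open Scope ring_scope.

Section IntegerLattice.
Variable k : nat.
Implicit Types v w z : 'I_k -> int.

Lemma shiftZ0 z : shiftZ \0 z = z.
Proof. by apply: functional_extensionality => i; rewrite /shiftZ addr0. Qed.

Lemma shiftZD v w z : shiftZ w (shiftZ v z) = shiftZ (v \+ w) z.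
Proof. by apply: functional_extensionality => i; rewrite /shiftZ addrA. Qed.

Lemma shiftZNK v z : shiftZ v (shiftZ (\- v) z) = z.
Proof. by apply: functional_extensionality => i; rewrite /shiftZ addrNK. Qed.

Lemma unitZ_coord_sum v : (fun j => \sum_(i < k) v i * unitZ i j) = v.
Proof.
apply: functional_extensionality => j; rewrite (bigD1 j) //= /unitZ eqxx mulr1.
by rewrite big1 ?addr0 // => i /negbTE; rewrite eq_sym => ->; rewrite mulr0.
Qed.

Lemma Zk_subgroup_unitZ (P : ('I_k -> int) -> Prop) :
  P \0 -> (forall v w, P v -> P w -> P (v \+ w)) -> (forall v, P v -> P (\- v)) ->
  (forall i, P (unitZ i)) -> forall v, P v.
Proof.
move=> P0 PD PN Pe v.
have Pmul i (m : int) : P (fun j => m * unitZ i j).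
  have Pnat (n : nat) : P (fun j => n%:Z * unitZ i j).
    elim: n => [|n IHn].
      by have -> : (fun j => 0%:Z * unitZ i j) = \0
        by apply: functional_extensionality => j; rewrite mul0r.
    have -> : (fun j => n.+1%:Z * unitZ i j) = (fun j => n%:Z * unitZ i j) \+ unitZ i.
      by apply: functional_extensionality => j; rewrite /= -addn1 PoszD mulrDl mul1r.
    exact: PD.
  case: m => [n|n]; first exact: Pnat.
  have -> : (fun j => Negz n * unitZ i j) = \- (fun j => n.+1%:Z * unitZ i j).
    by apply: functional_extensionality => j; rewrite /= NegzE mulNr.
  exact/PN/Pnat.
rewrite -[v in P v]unitZ_coord_sum; elim: (index_enum _) => [|i s IHs].
  by have -> : (fun j => \sum_(i <- [::]) v i * unitZ i j) = \0
    by apply: functional_extensionality => j; rewrite big_nil.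
have -> : (fun j => \sum_(i' <- i :: s) v i' * unitZ i' j) =
          (fun j => v i * unitZ i j) \+ (fun j => \sum_(i' <- s) v i' * unitZ i' j).
  by apply: functional_extensionality => j; rewrite big_cons.
exact: PD.
Qed.

End IntegerLattice.

Section TermRatios.
Variables (K : fieldType) (k : nat) (f : ('I_k -> int) -> K).
Implicit Types (p A B : {mpoly K[k]}) (v z : 'I_k -> int).

Definition mshift p v : {mpoly K[k]} :=
  p \mPo [tuple 'X_i + ((v i)%:~R)%:MP | i < k].

Lemma evalZ_mshift p v z : evalZ (mshift p v) z = evalZ p (shiftZ v z).
Proof.
rewrite /evalZ /mshift comp_mpoly_meval; apply: meval_eq => i.
by rewrite tnth_mktuple mevalD mevalXU mevalC /shiftZ rmorphD.
Qed.

Lemma evalZM p q z : evalZ (p * q) z = evalZ p z * evalZ q z.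
Proof. exact: mevalM. Qed.

Lemma evalZB p q z : evalZ (p - q) z = evalZ p z - evalZ q z.
Proof. exact: mevalB. Qed.

Lemma mshift_eq0_vanish p v : mshift p v = 0 -> forall z, evalZ p z = 0.
Proof.
move=> p0 z; rewrite -[z](shiftZNK v) -evalZ_mshift p0.
exact: meval0.
Qed.

Definition has_term_ratio v := exists A B,
  [/\ A != 0, B != 0 & forall z, evalZ A z * f z = evalZ B z * f (shiftZ v z)].

Lemma has_term_ratioP v : has_term_ratio v <-> exists R, term_ratio f v R.
Proof.
split=> [[A [B [A0 B0 hAB]]] | [_ [A [B [A0 B0 _ hAB]]]]]; last by exists A, B.
by exists (tofrac A / tofrac B), A, B.
Qed.

Lemma has_term_ratio0 : has_term_ratio \0.
Proof. by exists 1, 1; split => [||z]; rewrite ?oner_eq0 ?shiftZ0. Qed.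

Hypothesis f_nzd : ~ zero_divisor f.

Lemma mshift_neq0 p v : p != 0 -> mshift p v != 0.
Proof.
move=> p0; apply/eqP => /mshift_eq0_vanish p_vanish; apply: f_nzd.
by exists p; split=> // z; rewrite p_vanish mul0r.
Qed.

Lemma has_term_ratioD v w :
  has_term_ratio v -> has_term_ratio w -> has_term_ratio (v \+ w).
Proof.
move=> [A [B [A0 B0 hAB]]] [C [D [C0 D0 hCD]]].
exists (A * mshift C v), (B * mshift D v); split; rewrite ?mulf_neq0 ?mshift_neq0 //.
move=> z; rewrite !evalZM !evalZ_mshift -shiftZD.
by rewrite mulrAC hAB -!mulrA [f _ * _]mulrC hCD.
Qed.

Lemma has_term_ratioN v : has_term_ratio v -> has_term_ratio (\- v).
Proof.
move=> [A [B [A0 B0 hAB]]].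
exists (mshift B (\- v)), (mshift A (\- v)); split; rewrite ?mshift_neq0 //.
by move=> z; rewrite !evalZ_mshift hAB shiftZNK.
Qed.

Lemma cross_mul_eq_of_term_ratio v A B A' B' :
  (forall z, evalZ A z * f z = evalZ B z * f (shiftZ v z)) ->
  (forall z, evalZ A' z * f z = evalZ B' z * f (shiftZ v z)) ->
  A * B' = A' * B.
Proof.
move=> hAB hAB'; apply/eqP; rewrite -subr_eq0; apply/negP => /negP cross0.
apply: f_nzd; exists (A * B' - A' * B); split => // z.
rewrite evalZB !evalZM.
have -> : (evalZ A z * evalZ B' z - evalZ A' z * evalZ B z) * f z =
          evalZ B' z * (evalZ A z * f z) - evalZ B z * (evalZ A' z * f z) by ring.
by rewrite hAB hAB'; ring.
Qed.

Lemma term_ratio_unique v R R' : term_ratio f v R -> term_ratio f v R' -> R = R'.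
Proof.
move=> [A [B [_ B0 -> hAB]]] [A' [B' [_ B'0 -> hAB']]].
apply/eqP; rewrite eqr_div ?tofrac_eq0 // -!tofracM tofrac_eq.
by rewrite (cross_mul_eq_of_term_ratio hAB hAB').
Qed.

End TermRatios.

Theorem lemmaB6 (K : fieldType) (k : nat) (f : ('I_k -> int) -> K) :
  hypergeometric f -> ~ zero_divisor f ->
  forall v : 'I_k -> int,
    exists! R : {fraction {mpoly K[k]}}, term_ratio f v R.
Proof.
move=> hg nzd v.
have : has_term_ratio f v.
  apply: Zk_subgroup_unitZ v; first exact: has_term_ratio0.
  - exact: has_term_ratioD.
  - exact: has_term_ratioN.
  - exact: hg.
case/has_term_ratioP => R hR; exists R; split=> // R'.
exact: term_ratio_unique.
Qed.
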